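(* Let $f(x,W)=\psi\big(\phi(\cdots\phi(\phi(xW^1+b^1)W^2+b^2)\cdots)W^l+b^l\big)$ be a fully-connected neural network with input $x=(x^1,\dots,x^m)\in\mathbb{R}^m$, parameters $W=(W^1,b^1,\dots,W^l,b^l)$ (so the $j$-th neuron of the first hidden layer has pre-activation $\sum_{i=1}^m x^i w^1_{ij}+b^1_j$, where $w^1_{ij}$ is the $(i,j)$ entry of $W^1$), intermediate nonlinearity $\phi$ and output link function $\psi$. Let $D=\{(x_k,y_k)\}_{k=1}^n$ be a training set, let the likelihood be $p(y\mid x,W)=\ell(y,f(x,W))$ for some function $\ell$, with $p(D\mid W)=\prod_{k=1}^n p(y_k\mid x_k,W)$, and let the posterior be $p(W\mid D)\propto p(D\mid W)\,p(W)$ for a prior density $p(W)$. Suppose that for some input index $i$ the feature $x_k^i=0$ for every training input $x_k$, and suppose that for some first-layer neuron $j$ the prior factorizes as $p(W)=p(w^1_{ij})\cdot p(W\setminus w^1_{ij})$, where $W\setminus w^1_{ij}$ denotes all parameters except $w^1_{ij}$. Then the posterior factorizes as $$p(W\mid D)=p(W\setminus w^1_{ij}\mid D)\cdot p(w^1_{ij}),$$ i.e. the marginal posterior of $w^1_{ij}$ coincides with its prior and is independent of the remaining parameters. Consequently, a MAP solution $\arg\max_W p(W\mid D)$ sets $w^1_{ij}$ to a value of maximum prior density $p(w^1_{ij})$.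
   Context: Upper indices on inputs denote features and lower indices denote data points. A MAP solution is a maximizer of the posterior density $p(W\mid D)$. *)

From HB Require Import structures.
From mathcomp Require Import all_boot all_order all_algebra.
From mathcomp Require Import all_classical all_reals all_analysis.
Set Implicit Arguments. Unset Strict Implicit. Unset Printing Implicit Defensive.
Import Order.TTheory GRing.Theory Num.Theory.
Local Open Scope ring_scope.

(* Parameters of a fully-connected network with input width m and layer
   widths ds = [:: d1; ...; dl]: the list of pairs (W^k, b^k), with
   W^k : 'M_(d_{k-1}, d_k) and b^k : 'rV_(d_k), d_0 = m. *)
Fixpoint params (R : Type) (m : nat) (ds : seq nat) : Type :=
  match ds with
  | [::] => unit
  | d :: ds' => ('M[R]_(m, d) * 'rV[R]_d) * params R d ds'
  end.

(* Pre-activation of the last layer.  The flag [act] says whether the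
   nonlinearity phi must be applied to the incoming vector (false for the
   raw input x, true for all hidden layers). *)
Fixpoint net_pre (R : pzRingType) (phi : R -> R) (act : bool) (m : nat)
  (ds : seq nat) : 'rV[R]_m -> params R m ds -> 'rV[R]_(last m ds) :=
  match ds as ds0 return 'rV[R]_m -> params R m ds0 -> 'rV[R]_(last m ds0) with
  | [::] => fun z _ => z
  | d :: ds' => fun z W =>
      net_pre phi true ((if act then map_mx phi z else z) *m W.1.1 + W.1.2) W.2
  end.

Definition net (R : pzRingType) (O : Type) (phi : R -> R) (m : nat) (ds : seq nat)
  (psi : 'rV[R]_(last m ds) -> O) (x : 'rV[R]_m) (W : params R m ds) : O :=
  psi (net_pre phi false x W).

Definition get_w1 (R : Type) (m d1 : nat) (ds : seq nat) (i : 'I_m) (j : 'I_d1)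
  (W : params R m (d1 :: ds)) : R := W.1.1 i j.

Definition set_w1 (R : Type) (m d1 : nat) (ds : seq nat) (i : 'I_m) (j : 'I_d1)
  (W : params R m (d1 :: ds)) (t : R) : params R m (d1 :: ds) :=
  ((\matrix_(a < m, b < d1) (if (a == i) && (b == j) then t else W.1.1 a b),
    W.1.2), W.2).

Definition data_lik (R : comPzRingType) (O Y : Type) (m : nat) (P : Type) (n : nat)
  (f : 'rV[R]_m -> P -> O) (ell : Y -> O -> R)
  (xs : 'I_n -> 'rV[R]_m) (ys : 'I_n -> Y) (W : P) : R :=
  \prod_(k < n) ell (ys k) (f (xs k) W).

Definition marg_rest (R : realType) (m d1 : nat) (ds : seq nat) (i : 'I_m) (j : 'I_d1)
  (post : params R m (d1 :: ds) -> R) (W : params R m (d1 :: ds)) : \bar R :=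
  (\int[@lebesgue_measure R]_t (post (set_w1 i j W t))%:E)%E.

From HB Require Import structures.
From mathcomp Require Import all_boot all_order all_algebra.
From mathcomp Require Import all_classical all_reals all_analysis.
From mathcomp Require Import ring measurable_realfun.
Set Implicit Arguments. Unset Strict Implicit. Unset Printing Implicit Defensive.
Import Order.TTheory GRing.Theory Num.Theory.
Local Open Scope ring_scope.

(* Since the feature x^i vanishes on the data, the weight w^1_{ij} only ever
   multiplies zero, so the likelihood does not depend on it.  The posterior is
   therefore p(w^1_{ij}) times a function g of the other parameters;
   integrating out w^1_{ij} against the normalised prior density returns g,
   and at a maximiser g > 0, so maximising the posterior in the coordinate
   w^1_{ij} maximises p(w^1_{ij}). *)

Lemma get_set_w1 (R : Type) (m d1 : nat) (ds : seq nat) (i : 'I_m) (j : 'I_d1)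
    (W : params R m (d1 :: ds)) (t : R) :
  get_w1 i j (set_w1 i j W t) = t.
Proof. by rewrite /get_w1 /set_w1 /= mxE !eqxx. Qed.

Lemma mulmx_eq_off_row (R : pzSemiRingType) (m d : nat) (i : 'I_m)
    (x : 'rV[R]_m) (A B : 'M[R]_(m, d)) :
  x 0 i = 0 -> (forall a b, a != i -> A a b = B a b) -> x *m A = x *m B.
Proof.
move=> xi0 eqAB; apply/matrixP => r b; rewrite !mxE (ord1 r).
apply: eq_bigr => a _; have [->|ai] := eqVneq a i; first by rewrite xi0 !mul0r.
by rewrite eqAB.
Qed.

Lemma net_set_w1 (R : pzRingType) (O : Type) (phi : R -> R) (m d1 : nat)
    (ds : seq nat) (psi : 'rV[R]_(last m (d1 :: ds)) -> O) (i : 'I_m)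
    (j : 'I_d1) (x : 'rV[R]_m) (W : params R m (d1 :: ds)) (t : R) :
  x 0 i = 0 -> net phi psi x (set_w1 i j W t) = net phi psi x W.
Proof.
move=> xi0; rewrite /net /=; do 3 f_equal.
by apply: (mulmx_eq_off_row xi0) => a b ai; rewrite mxE (negbTE ai).
Qed.

Lemma data_lik_set_w1 (R : comPzRingType) (O Y : Type) (phi : R -> R)
    (m d1 : nat) (ds : seq nat) (psi : 'rV[R]_(last m (d1 :: ds)) -> O)
    (ell : Y -> O -> R) (n : nat) (xs : 'I_n -> 'rV[R]_m) (ys : 'I_n -> Y)
    (i : 'I_m) (j : 'I_d1) (W : params R m (d1 :: ds)) (t : R) :
  (forall k, xs k 0 i = 0) ->
  data_lik (net phi psi) ell xs ys (set_w1 i j W t)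
  = data_lik (net phi psi) ell xs ys W.
Proof. by move=> xs0; apply: eq_bigr => k _; rewrite net_set_w1. Qed.

Lemma integral_scaled_density (R : realType) (d : measure_display)
    (T : measurableType d) (mu : {measure set T -> \bar R}) (p : T -> R) (a : R) :
  measurable_fun setT p -> (forall t, 0 <= p t) ->
  (\int[mu]_t (p t)%:E = 1)%E ->
  (\int[mu]_t (a * p t)%:E = a%:E)%E.
Proof.
move=> mp p0 int1.
have ip : mu.-integrable setT (fun t => (p t)%:E).
  apply/integrableP; split; first exact/measurable_EFinP.
  under eq_fun do rewrite gee0_abs ?lee_fin //.
  by rewrite int1 ltry.
under eq_fun do rewrite EFinM.
by rewrite integralZl // int1 mule1.
Qed.

Section PosteriorFactorisation.
Variables (R : realType) (m d1 : nat) (ds : seq nat) (i : 'I_m) (j : 'I_d1).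
Variables (pw : R -> R) (g post : params R m (d1 :: ds) -> R).
Hypothesis g_set_w1 : forall W t, g (set_w1 i j W t) = g W.
Hypothesis post_factor : forall W, post W = pw (get_w1 i j W) * g W.

Lemma marg_rest_factor (W : params R m (d1 :: ds)) :
  measurable_fun setT pw -> (forall t, 0 <= pw t) ->
  (\int[@lebesgue_measure R]_t (pw t)%:E = 1)%E ->
  marg_rest i j post W = (g W)%:E.
Proof.
move=> mpw pw0 int1; rewrite /marg_rest.
under eq_fun do rewrite post_factor get_set_w1 g_set_w1 mulrC.
exact: integral_scaled_density.
Qed.

Lemma argmax_post_maximises_pw (Wstar : params R m (d1 :: ds)) :
  (forall t, 0 <= pw t) -> 0 < post Wstar ->
  (forall W, post W <= post Wstar) -> forall t, pw t <= pw (get_w1 i j Wstar).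
Proof.
move=> pw0 post_gt0 Wstar_max t.
have g_gt0 : 0 < g Wstar.
  move: post_gt0; rewrite post_factor; apply: contraTT; rewrite -!leNgt.
  exact: mulr_ge0_le0.
have := Wstar_max (set_w1 i j Wstar t).
by rewrite !post_factor get_set_w1 g_set_w1 ler_pM2r.
Qed.

End PosteriorFactorisation.

Theorem lemma1 (R : realType) (O Y : Type) (m d1 : nat) (ds : seq nat)
  (phi : R -> R) (psi : 'rV[R]_(last m (d1 :: ds)) -> O) (ell : Y -> O -> R)
  (n : nat) (xs : 'I_n -> 'rV[R]_m) (ys : 'I_n -> Y)
  (i : 'I_m) (j : 'I_d1)
  (prior : params R m (d1 :: ds) -> R)
  (pw : R -> R) (prest : params R m (d1 :: ds) -> R)
  (post : params R m (d1 :: ds) -> R) (c : R) :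
  (* the feature i vanishes on every training input *)
  (forall k : 'I_n, xs k 0 i = 0) ->
  (* p(w^1_ij) is a probability density on R *)
  measurable_fun setT pw -> (forall t, 0 <= pw t) ->
  (\int[@lebesgue_measure R]_t (pw t)%:E = 1)%E ->
  (* prior factorisation p(W) = p(w^1_ij) * p(W \ w^1_ij) *)
  (forall W t, prest (set_w1 i j W t) = prest W) ->
  (forall W, prior W = pw (get_w1 i j W) * prest W) ->
  (* posterior p(W | D) proportional to p(D | W) p(W) *)
  0 < c ->
  (forall W, post W = c * (data_lik (net phi psi) ell xs ys W * prior W)) ->
  (* the posterior is not identically zero *)
  (exists W0, 0 < post W0) ->
  (forall W, (post W)%:E = (marg_rest i j post W * (pw (get_w1 i j W))%:E)%E)
  /\
  (forall Wstar, (forall W, post W <= post Wstar) ->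
     forall t, pw t <= pw (get_w1 i j Wstar)).
Proof.
move=> xs0 mpw pw0 int1 prest_set prior_factor _ post_def [W0 post_W0].
pose g W := c * data_lik (net phi psi) ell xs ys W * prest W.
have g_set W t : g (set_w1 i j W t) = g W.
  by rewrite /g prest_set data_lik_set_w1.
have post_factor W : post W = pw (get_w1 i j W) * g W.
  by rewrite post_def prior_factor /g; ring.
split=> [W | Wstar Wstar_max].
  by rewrite (marg_rest_factor g_set post_factor) // post_factor -EFinM mulrC.
apply: (argmax_post_maximises_pw g_set post_factor pw0 _ Wstar_max).
exact: lt_le_trans post_W0 (Wstar_max W0).
Qed.
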